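(* Let $X=\{x_j:j\in J\}\subset\mathbb{R}^2$ be finite with $n=|J|$. If there exist weights $\tau_j\geq\frac{1}{n+1}$ ($j\in J$) with $\sum_j\tau_j=1$ and $s=\sum_j\tau_jx_j$, then $s\in\mathrm{conv}(\mathcal{M})$.
   Context: $\mathcal{M}=\{M_j:j\in J\}$ with $M_j=\frac{1}{n+1}\big(x_j+\sum_{i\in J}x_i\big)$. *)

From HB Require Import structures.
From mathcomp Require Import all_boot all_order all_algebra.
From mathcomp Require Import reals.
Set Implicit Arguments. Unset Strict Implicit. Unset Printing Implicit Defensive.
Import Order.TTheory GRing.Theory Num.Theory.
Local Open Scope ring_scope.

Definition Mpt (R : realType) (J : finType) (x : J -> 'rV[R]_2) (j : J)
  : 'rV[R]_2 :=
  (#|J|.+1%:R)^-1 *: (x j + \sum_(i : J) x i).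

Definition in_conv_hull (R : realType) (J : finType) (p : J -> 'rV[R]_2)
  (s : 'rV[R]_2) : Prop :=
  exists lam : J -> R,
    (forall j, 0 <= lam j) /\ \sum_(j : J) lam j = 1 /\
    s = \sum_(j : J) lam j *: p j.

(* With N = |J| + 1, the weights lam_j = N tau_j - 1 are nonnegative because
   tau_j >= 1/N, and they sum to N - |J| = 1.  Since the lam_j sum to 1, the
   combination sum_j lam_j M_j equals (1/N) (sum_j lam_j x_j + sum_i x_i), and
   sum_j lam_j x_j = N s - sum_i x_i, so it equals s. *)
From HB Require Import structures.
From mathcomp Require Import all_boot all_order all_algebra.
From mathcomp Require Import reals.
Import Order.TTheory GRing.Theory Num.Theory.
Local Open Scope ring_scope.

Section AffineCombinations.

Variables (R : pzRingType) (V : lmodType R) (J : finType).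
Implicit Types (lam tau : J -> R) (x : J -> V).

Lemma sumr_affine_weights (c : R) tau :
  \sum_j tau j = 1 -> \sum_j (c * tau j - 1) = c - #|J|%:R.
Proof. by move=> tau1; rewrite sumrB -mulr_sumr tau1 mulr1 sumr_const. Qed.

Lemma scaler_sum_affine_weights (c : R) tau x :
  \sum_j (c * tau j - 1) *: x j = c *: \sum_j tau j *: x j - \sum_j x j.
Proof.
rewrite scaler_sumr -sumrB; apply: eq_bigr => j _.
by rewrite scalerBl scale1r scalerA.
Qed.

Lemma affine_comb_translate lam x (y : V) :
  \sum_j lam j = 1 -> \sum_j lam j *: (x j + y) = \sum_j lam j *: x j + y.
Proof.
by move=> lam1; rewrite -[in RHS](scale1r y) -lam1 scaler_suml -big_split;
  apply: eq_bigr => j _; rewrite scalerDr.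
Qed.

End AffineCombinations.

Theorem lemma7 (R : realType) (J : finType) (x : J -> 'rV[R]_2)
  (x_inj : injective x) (tau : J -> R)
  (tau_ge : forall j, (#|J|.+1%:R)^-1 <= tau j)
  (tau_sum : \sum_(j : J) tau j = 1)
  (s : 'rV[R]_2) (s_def : s = \sum_(j : J) tau j *: x j) :
  in_conv_hull (Mpt x) s.
Proof.
set N : R := #|J|.+1%:R.
have N_gt0 : 0 < N by rewrite ltr0n.
have lam1 : \sum_j (N * tau j - 1) = 1.
  by rewrite sumr_affine_weights // /N -natr1 addrC addKr.
exists (fun j => N * tau j - 1); split; [|split] => //.
  by move=> j; rewrite subr_ge0 -ler_pdivrMl // mulr1.
have Mpt_comb j (lam : R) : lam *: Mpt x j = N^-1 *: (lam *: (x j + \sum_i x i)).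
  by rewrite /Mpt scalerA mulrC -scalerA.
under eq_bigr do rewrite Mpt_comb.
rewrite -scaler_sumr affine_comb_translate // scaler_sum_affine_weights -s_def.
by rewrite subrK scalerA mulVf ?scale1r // gt_eqF.
Qed.
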